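(* Let $R$ be a regular run, $x$ a track, and $0=t_0<t_1<t_2<\cdots$ the significant moments of $x$. Then: (1) $\mathrm{Deadline}(x)=\infty$ at $0$ and over every interval $(t_{3i},t_{3i+1}]$, and $\mathrm{Deadline}(x)=t_{3i+1}+W$ over every interval $(t_{3i+1},t_{3i+3}]$ (and if the sequence is finite with last element $t_k$, then $\mathrm{Deadline}(x)=\infty$ over $(t_k,\infty)$); (2) if $0\le a<b<\infty$ and $\mathrm{TrackStatus}(x)\neq\text{incrossing}$ over $(a,b)$, then $\mathrm{Deadline}(x)\ge b-\Delta_{close}$ over $(a,b)$.
   Context: Setting (evolving algebra for the railroad crossing). States are structures over a vocabulary containing: a finite universe Tracks; the reals and ExtendedReals $=\mathbb{R}\cup\{\infty\}$ with standard $<$ and $+$ ($\infty$ largest); a nullary real-valued symbol $\mathrm{CT}$ (current time); positive real constants $d_{close},d_{open},d_{min},d_{max}$ with $d_{close}<d_{min}\le d_{max}$; a unary function TrackStatus from Tracks to $\{\text{empty},\text{coming},\text{incrossing}\}$; a unary function Deadline from Tracks to ExtendedReals; a nullary Dir with values in $\{\text{open},\text{close}\}$; a nullary GateStatus with values in $\{\text{opened},\text{closed}\}$. Put $W=d_{min}-d_{close}$ and $\Delta_{close}=d_{close}+(d_{max}-d_{min})=d_{max}-W$. For a track $x$, $s(x)$ is the condition [$\mathrm{TrackStatus}(x)=\text{empty}$ or $\mathrm{CT}+d_{open}<\mathrm{Deadline}(x)$], and SafeToOpen is $\forall x\in\mathrm{Tracks}\ s(x)$. The program has two modules (agents). Gate: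 simultaneously OpenGate ''if Dir=open then GateStatus:=opened'' and CloseGate ''if Dir=close then GateStatus:=closed''. Controller: simultaneously, for every track $x$, SetDeadline$(x)$ ''if TrackStatus$(x)$=coming and Deadline$(x)=\infty$ then Deadline$(x):=\mathrm{CT}+W$'', SignalClose$(x)$ ''if $\mathrm{CT}=$Deadline$(x)$ then Dir:=close'', ClearDeadline$(x)$ ''if TrackStatus$(x)$=empty and Deadline$(x)<\infty$ then Deadline$(x):=\infty$'', together with SignalOpen ''if Dir=close and SafeToOpen then Dir:=open''. Executing a module means computing all updates it generates in the current state and performing them simultaneously (nothing happens if the update set is inconsistent). A module is enabled at a state if its update set is consistent and contains an update that changes the state. TrackStatus is external (changed only by the environment); Deadline, Dir, GateStatus are internal (changed only by the modules); other symbols are static. Runs: for $t\mapsto R(t)$, $t\in[0,\infty)$, let $\rho(t)$ be the reduct of $R(t)$ without CT. $R$ is a pre-run if all $R(t)$ share a superuniverse, $\mathrm{CT}=t$ in $R(t)$, and for every $\tau>0$ there are $0=t_0<\dots<t_n=\tau$ with $\rho$ constant on each $(t_i,t_{i+1})$. For a term $e$ (free variables fixed), $e_t$ is its value in $R(t)$, $e_{t+}$ (resp. $e_{t-}$, $t>0$) its constant value on some $(t,t+\epsilon)$ (resp. $(t-\epsilon,t)$); likewise $\rho(t\pm)$. $e$ holds over an interval if it holds at each point; $e$ becomes (is set to) $a$ at $t$ if $e_{t-}\ne a=e_t$ or $e_t\neq a=e_{t+}$. A pre-run is a run if (i) whenever $\rho(t+)\neq\rho(t)$, $\rho(t+)$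 is the CT-free reduct of the result of executing some modules at $R(t)$ (these agents fire at $t$), with external functions equal in $\rho(t)$ and $\rho(t+)$; (ii) whenever $t>0$ and $\rho(t)\ne\rho(t-)$, they differ only in external functions. An agent is immediate if it fires at every moment it is enabled; bounded if immediate or there is $b>0$ with no interval $(t,t+b)$ over which it is enabled but never fires. Initial states: TrackStatus$(x)$=empty and Deadline$(x)=\infty$ for every track $x$. A regular run is a run $R$ with $R(0)$ initial such that: (Train Motion) for each track $x$ there is a finite or infinite sequence $0=t_0<t_1<t_2<\cdots$ (the significant moments of $x$) with TrackStatus$(x)$=empty over each $[t_{3i},t_{3i+1})$, =coming over each $[t_{3i+1},t_{3i+2})$ where $d_{min}\le t_{3i+2}-t_{3i+1}\le d_{max}$, =incrossing over each $[t_{3i+2},t_{3i+3})$, and, if the sequence is finite with last element $t_k$, then $3\mid k$ and TrackStatus$(x)$=empty over $[t_k,\infty)$; (Controller Timing) Controller is immediate; (Gate Timing) Gate is bounded, there is no interval $(t,t+d_{close})$ over which Dir=close and GateStatus=opened both hold, and no interval $(t,t+d_{open})$ over which Dir=open and GateStatus=closed both hold. *)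

From Stdlib Require Import Reals List.
Open Scope R_scope.

Inductive ER : Type := Fin (r : R) | Inf.

Definition ER_lt (a b : ER) : Prop :=
  match a, b with
  | Fin r, Fin s => r < s
  | Fin _, Inf => True
  | Inf, _ => False
  end.

Definition ER_ge (a b : ER) : Prop :=
  match a, b with
  | _, Inf => a = Inf
  | Inf, Fin _ => True
  | Fin r, Fin s => r >= s
  end.

Inductive TStatus := empty | coming | incrossing.
Inductive DirVal := Dopen | Dclose.
Inductive GateVal := opened | closed.

Record Params := mkParams { d_close : R; d_open : R; d_min : R; d_max : R }.

Definition valid_params (p : Params) : Prop :=
  0 < d_close p /\ 0 < d_open p /\ 0 < d_min p /\ 0 < d_max p /\
  d_close p < d_min p /\ d_min p <= d_max p.

Definition W (p : Params) : R := d_min p - d_close p.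
Definition Delta_close (p : Params) : R := d_close p + (d_max p - d_min p).

Definition FiniteType (T : Type) : Prop := exists l : list T, forall x : T, In x l.

(* The CT-free reduct rho(t) of a state: the dynamic functions.
   (Static symbols are fixed by Params; CT is the time t itself.) *)
Record State (Track : Type) := mkState {
  TrackStatus : Track -> TStatus;
  Deadline : Track -> ER;
  Dir : DirVal;
  GateStatus : GateVal }.
Arguments TrackStatus {Track}. Arguments Deadline {Track}.
Arguments Dir {Track}. Arguments GateStatus {Track}.

Definition st_eq {Track} (s1 s2 : State Track) : Prop :=
  (forall x, TrackStatus s1 x = TrackStatus s2 x) /\
  (forall x, Deadline s1 x = Deadline s2 x) /\
  Dir s1 = Dir s2 /\ GateStatus s1 = GateStatus s2.

Definition internal_eq {Track} (s1 s2 : State Track) : Prop :=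
  (forall x, Deadline s1 x = Deadline s2 x) /\
  Dir s1 = Dir s2 /\ GateStatus s1 = GateStatus s2.

Inductive Update (Track : Type) :=
  | UDeadline (x : Track) (e : ER)
  | UDir (d : DirVal)
  | UGate (g : GateVal).
Arguments UDeadline {Track}. Arguments UDir {Track}. Arguments UGate {Track}.

Definition UpdSet (Track : Type) := Update Track -> Prop.

Definition SafeToOpen {Track} (p : Params) (s : State Track) (t : R) : Prop :=
  forall x, TrackStatus s x = empty \/ ER_lt (Fin (t + d_open p)) (Deadline s x).

Definition ctrl_upd {Track} (p : Params) (s : State Track) (t : R) : UpdSet Track :=
  fun u => match u with
  | UDeadline x e =>
      (TrackStatus s x = coming /\ Deadline s x = Inf /\ e = Fin (t + W p)) \/
      (TrackStatus s x = empty /\ ER_lt (Deadline s x) Inf /\ e = Inf)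
  | UDir d =>
      (d = Dclose /\ exists x, Deadline s x = Fin t) \/
      (d = Dopen /\ Dir s = Dclose /\ SafeToOpen p s t)
  | UGate _ => False
  end.

Definition gate_upd {Track} (s : State Track) : UpdSet Track :=
  fun u => match u with
  | UGate g => (g = opened /\ Dir s = Dopen) \/ (g = closed /\ Dir s = Dclose)
  | _ => False
  end.

Inductive Agent := Gate | Controller.

Definition agent_upd {Track} (p : Params) (A : Agent) (s : State Track) (t : R)
  : UpdSet Track :=
  match A with Gate => gate_upd s | Controller => ctrl_upd p s t end.

Definition consistent {Track} (U : UpdSet Track) : Prop :=
  (forall x e1 e2, U (UDeadline x e1) -> U (UDeadline x e2) -> e1 = e2) /\
  (forall d1 d2, U (UDir d1) -> U (UDir d2) -> d1 = d2) /\
  (forall g1 g2, U (UGate g1) -> U (UGate g2) -> g1 = g2).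

Definition applied {Track} (U : UpdSet Track) (s s' : State Track) : Prop :=
  (forall x, TrackStatus s' x = TrackStatus s x) /\
  (forall x, (forall e, U (UDeadline x e) -> Deadline s' x = e) /\
             ((forall e, ~ U (UDeadline x e)) -> Deadline s' x = Deadline s x)) /\
  (forall d, U (UDir d) -> Dir s' = d) /\
  ((forall d, ~ U (UDir d)) -> Dir s' = Dir s) /\
  (forall g, U (UGate g) -> GateStatus s' = g) /\
  ((forall g, ~ U (UGate g)) -> GateStatus s' = GateStatus s).

Definition exec_rel {Track} (p : Params) (M : Agent -> Prop) (s : State Track)
  (t : R) (s' : State Track) : Prop :=
  let U := fun u => exists A, M A /\ agent_upd p A s t u in
  (consistent U -> applied U s s') /\ (~ consistent U -> st_eq s' s).

Definition changes {Track} (u : Update Track) (s : State Track) : Prop :=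
  match u with
  | UDeadline x e => Deadline s x <> e
  | UDir d => Dir s <> d
  | UGate g => GateStatus s <> g
  end.

Definition enabled {Track} (p : Params) (A : Agent) (s : State Track) (t : R) : Prop :=
  consistent (agent_upd p A s t) /\
  exists u, agent_upd p A s t u /\ changes u s.

Definition RightLim {Track} (rho : R -> State Track) (t : R) (s : State Track) : Prop :=
  exists eps, 0 < eps /\ forall u, t < u < t + eps -> st_eq (rho u) s.
Definition LeftLim {Track} (rho : R -> State Track) (t : R) (s : State Track) : Prop :=
  exists eps, 0 < eps <= t /\ forall u, t - eps < u < t -> st_eq (rho u) s.

(* A pre-run, given by its CT-free reducts rho(t), t >= 0 (CT = t implicitly;
   the values of rho at negative arguments are irrelevant). *)
Definition pre_run {Track} (rho : R -> State Track) : Prop :=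
  forall tau, 0 < tau ->
  exists (n : nat) (pt : nat -> R),
    pt 0%nat = 0 /\ pt n = tau /\
    (forall i, (i < n)%nat -> pt i < pt (S i)) /\
    (forall i, (i < n)%nat -> forall u v,
        pt i < u < pt (S i) -> pt i < v < pt (S i) -> st_eq (rho u) (rho v)).

Definition is_run {Track} (p : Params) (rho : R -> State Track) : Prop :=
  pre_run rho /\
  (forall t s, 0 <= t -> RightLim rho t s -> ~ st_eq s (rho t) ->
     (exists M, exec_rel p M (rho t) t s) /\
     (forall x, TrackStatus s x = TrackStatus (rho t) x)) /\
  (forall t s, 0 < t -> LeftLim rho t s -> internal_eq (rho t) s).

Definition fires {Track} (p : Params) (rho : R -> State Track) (A : Agent) (t : R)
  : Prop :=
  exists s, RightLim rho t s /\ ~ st_eq s (rho t) /\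
    exists M, M A /\ exec_rel p M (rho t) t s.

Definition immediate {Track} (p : Params) (rho : R -> State Track) (A : Agent) : Prop :=
  forall t, 0 <= t -> enabled p A (rho t) t -> fires p rho A t.

Definition bounded {Track} (p : Params) (rho : R -> State Track) (A : Agent) : Prop :=
  immediate p rho A \/
  exists b, 0 < b /\ forall t, 0 <= t ->
    ~ ((forall u, t < u < t + b -> enabled p A (rho u) u) /\
       (forall u, t < u < t + b -> ~ fires p rho A u)).

Definition initial_state {Track} (s : State Track) : Prop :=
  forall x, TrackStatus s x = empty /\ Deadline s x = Inf.

(* valid indices of a finite (Some k: t_0..t_k) or infinite (None) sequence *)
Definition idx_ok (len : option nat) (n : nat) : Prop :=
  match len with None => True | Some k => (n <= k)%nat end.

Definition sig_moments {Track} (p : Params) (rho : R -> State Track) (x : Track)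
  (sig : nat -> R) (len : option nat) : Prop :=
  sig 0%nat = 0 /\
  (forall n, idx_ok len (S n) -> sig n < sig (S n)) /\
  (forall i, idx_ok len (3*i+1) ->
     forall u, sig (3*i)%nat <= u < sig (3*i+1)%nat -> TrackStatus (rho u) x = empty) /\
  (forall i, idx_ok len (3*i+2) ->
     (forall u, sig (3*i+1)%nat <= u < sig (3*i+2)%nat -> TrackStatus (rho u) x = coming) /\
     d_min p <= sig (3*i+2)%nat - sig (3*i+1)%nat <= d_max p) /\
  (forall i, idx_ok len (3*i+3) ->
     forall u, sig (3*i+2)%nat <= u < sig (3*i+3)%nat -> TrackStatus (rho u) x = incrossing) /\
  (forall k, len = Some k ->
     (exists j, k = (3*j)%nat) /\
     forall u, sig k <= u -> TrackStatus (rho u) x = empty).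

Definition regular_run {Track} (p : Params) (rho : R -> State Track) : Prop :=
  is_run p rho /\
  initial_state (rho 0) /\
  (forall x, exists sig len, sig_moments p rho x sig len) /\
  immediate p rho Controller /\
  bounded p rho Gate /\
  (forall t, 0 <= t -> ~ (forall u, t < u < t + d_close p ->
        Dir (rho u) = Dclose /\ GateStatus (rho u) = opened)) /\
  (forall t, 0 <= t -> ~ (forall u, t < u < t + d_open p ->
        Dir (rho u) = Dopen /\ GateStatus (rho u) = closed)).

From Stdlib Require Import Reals List Lra Lia Classical.
Open Scope R_scope.

(* The Deadline profile of (1), taken for all tracks at once, is propagated along the
   finitely many change points 0 = p_0 < ... < p_n = u that the pre-run has below any u.
   On (p_i, p_(i+1)) the state is constant and is the right limit at p_i; since the
   Controller is immediate, it carries the deadline updates made at time p_i, and by run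
   condition (ii) the deadline at p_(i+1) is the same.  The Controller's update set at p_i
   is consistent: the only possible clash, SignalClose(z) against SignalOpen, needs an
   empty track z with Deadline(z) = p_i, which the profile rules out.  Part (2) follows
   from the profile because a track is coming for at most d_max. *)

Fixpoint phase (j : nat) : TStatus :=
  match j with
  | 0 => empty | 1 => coming | 2 => incrossing
  | S (S (S j')) => phase j'
  end.

Lemma phase_3i i :
  phase (3*i) = empty /\ phase (3*i+1) = coming /\ phase (3*i+2) = incrossing.
Proof.
  induction i as [|i IH]; [simpl; auto|].
  replace (3 * S i)%nat with (S (S (S (3*i)))) by lia.
  replace (S (S (S (3*i))) + 1)%nat with (S (S (S (3*i+1)))) by lia.
  replace (S (S (S (3*i))) + 2)%nat with (S (S (S (3*i+2)))) by lia.
  exact IH.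
Qed.

Lemma nat_mod3_cases j : exists i, j = (3*i)%nat \/ j = (3*i+1)%nat \/ j = (3*i+2)%nat.
Proof.
  exists (j / 3)%nat. pose proof (Nat.div_mod_eq j 3). pose proof (Nat.mod_upper_bound j 3).
  lia.
Qed.

Lemma phase_succ_neq j : phase (S j) <> phase j.
Proof.
  destruct (nat_mod3_cases j) as [i [-> |[-> | ->]]].
  - replace (S (3*i)) with (3*i+1)%nat by lia.
    destruct (phase_3i i) as (-> & -> & _). discriminate.
  - replace (S (3*i+1)) with (3*i+2)%nat by lia.
    destruct (phase_3i i) as (_ & -> & ->). discriminate.
  - replace (S (3*i+2)) with (3*S i)%nat by lia.
    rewrite (proj1 (phase_3i (S i))), (proj2 (proj2 (phase_3i i))). discriminate.
Qed.

Lemma idx_ok_le len i j : idx_ok len j -> (i <= j)%nat -> idx_ok len i.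
Proof. destruct len; simpl; intros; [lia | exact I]. Qed.

Section SignificantMoments.

Context {T : Type} {p : Params} {rho : R -> State T} {y : T} {sig : nat -> R}
  {len : option nat}.
Hypothesis Hs : sig_moments p rho y sig len.

Lemma sig_lt j i : idx_ok len j -> (i < j)%nat -> sig i < sig j.
Proof.
  destruct Hs as (_ & Hinc & _).
  induction j as [|j IH]; intros Hj Hij; [lia|].
  destruct (Nat.eq_dec i j) as [->|Hij_ne]; [now apply Hinc|].
  apply Rlt_trans with (sig j); [|now apply Hinc].
  apply IH; [apply (idx_ok_le len j (S j) Hj)|]; lia.
Qed.

Lemma sig_ge0 j : idx_ok len j -> 0 <= sig j.
Proof.
  intros Hj. destruct j as [|j]; [rewrite (proj1 Hs); lra|].
  rewrite <- (proj1 Hs). left. apply sig_lt; [exact Hj | lia].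
Qed.

Lemma idx_ok_incrossing_end m : idx_ok len (3*m+2) -> idx_ok len (3*m+3).
Proof.
  destruct len as [k|]; [simpl | trivial]. intros Hm.
  destruct Hs as (_&_&_&_&_&Hf). destruct (Hf k eq_refl) as [[j ->] _]. lia.
Qed.

Lemma status_between j u :
  idx_ok len (S j) -> sig j <= u < sig (S j) -> TrackStatus (rho u) y = phase j.
Proof.
  intros Hj Hu. destruct Hs as (_&_&He&Hc&Hi&_).
  destruct (nat_mod3_cases j) as [i [-> |[-> | ->]]]; destruct (phase_3i i) as (A&B&C).
  - rewrite A. replace (S (3*i)) with (3*i+1)%nat in * by lia. exact (He i Hj u Hu).
  - rewrite B. replace (S (3*i+1)) with (3*i+2)%nat in * by lia. exact (proj1 (Hc i Hj) u Hu).
  - rewrite C. replace (S (3*i+2)) with (3*i+3)%nat in * by lia. exact (Hi i Hj u Hu).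
Qed.

Lemma status_at_moment j : idx_ok len j -> TrackStatus (rho (sig j)) y = phase j.
Proof.
  intros Hj. destruct (classic (idx_ok len (S j))) as [HS|HS].
  - apply status_between; [exact HS|]. split; [lra | apply sig_lt; [exact HS | lia]].
  - destruct len as [k|]; [simpl in * | now exfalso].
    replace j with k by lia. destruct Hs as (_&_&_&_&_&Hf).
    destruct (Hf k eq_refl) as [[i ->] Hlast]. rewrite (proj1 (phase_3i i)). apply Hlast. lra.
Qed.

(* The status changes at every significant moment, so none lies where rho is constant. *)
Lemma moment_not_in_constant_interval c c' j :
  0 <= c -> (forall u v, c < u < c' -> c < v < c' -> st_eq (rho u) (rho v)) ->
  idx_ok len j -> ~ (c < sig j < c').
Proof.
  intros Hc Hconst Hj [H1 H2].
  destruct j as [|j]; [rewrite (proj1 Hs) in H1; lra|].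
  assert (Hlt : sig j < sig (S j)) by (apply sig_lt; [exact Hj | lia]).
  set (v := (Rmax c (sig j) + sig (S j)) / 2).
  assert (Hv : sig j <= v < sig (S j) /\ c < v < c').
  { pose proof (Rmax_l c (sig j)). pose proof (Rmax_r c (sig j)).
    pose proof (Rmax_lub_lt c (sig j) (sig (S j)) H1 Hlt). unfold v. lra. }
  apply (phase_succ_neq j).
  rewrite <- (status_at_moment (S j) Hj), <- (status_between j v Hj (proj1 Hv)).
  symmetry. apply (Hconst v (sig (S j))); [exact (proj2 Hv) | lra].
Qed.

Lemma moment_le_left_end c c' j u :
  0 <= c -> (forall u v, c < u < c' -> c < v < c' -> st_eq (rho u) (rho v)) ->
  idx_ok len j -> c < u <= c' -> sig j < u -> sig j <= c.
Proof.
  intros Hc Hconst Hj Hu Hju. destruct (Rle_or_lt (sig j) c) as [Hle|Hlt]; [exact Hle|].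
  exfalso. apply (moment_not_in_constant_interval c c' j Hc Hconst Hj). lra.
Qed.

Lemma moments_grow (Hp : valid_params p) i :
  idx_ok len (3*i) -> INR i * d_min p <= sig (3*i)%nat.
Proof.
  destruct Hs as (H0&_&_&Hc&_).
  induction i as [|i IH]; intros Hi; [simpl; rewrite H0; lra|].
  rewrite S_INR.
  assert (Hi2 : idx_ok len (3*i+2)) by (apply (idx_ok_le len _ (3*S i) Hi); lia).
  assert (IH' := IH (idx_ok_le len (3*i) (3*S i) Hi ltac:(lia))).
  assert (A1 : sig (3*i)%nat < sig (3*i+1)%nat)
    by (apply sig_lt; [apply (idx_ok_le len _ (3*S i) Hi)|]; lia).
  assert (A2 : sig (3*i+2)%nat < sig (3*S i)%nat) by (apply sig_lt; [exact Hi | lia]).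
  destruct (proj2 (Hc i Hi2)). lra.
Qed.

Lemma moment_interval_of_le u N :
  0 < u -> idx_ok len N -> u <= sig N ->
  exists j, idx_ok len (S j) /\ sig j < u <= sig (S j).
Proof.
  intros Hu. induction N as [|N IH]; intros HN HuN; [rewrite (proj1 Hs) in HuN; lra|].
  destruct (Rle_or_lt u (sig N)) as [L|L].
  - apply IH; [apply (idx_ok_le len N (S N) HN); lia | exact L].
  - exists N. split; [exact HN | lra].
Qed.

Lemma positive_time_cases (Hp : valid_params p) u : 0 < u ->
  (exists i, idx_ok len (3*i+1) /\ sig (3*i)%nat < u <= sig (3*i+1)%nat) \/
  (exists i, idx_ok len (3*i+3) /\ sig (3*i+1)%nat < u <= sig (3*i+2)%nat) \/
  (exists i, idx_ok len (3*i+3) /\ sig (3*i+2)%nat < u <= sig (3*i+3)%nat) \/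
  (exists k, len = Some k /\ sig k < u).
Proof.
  intros Hu.
  assert (Hj : (exists j, idx_ok len (S j) /\ sig j < u <= sig (S j)) \/
               (exists k, len = Some k /\ sig k < u)).
  { assert (Hlen : (exists k, len = Some k) \/ len = None)
      by (destruct len; [left; eexists|right]; reflexivity).
    destruct Hlen as [[k Elen]|Elen].
    - destruct (Rle_or_lt u (sig k)) as [L|L]; [|right; now exists k].
      left. apply (moment_interval_of_le u k Hu); [rewrite Elen; simpl; lia | exact L].
    - left. pose proof Hp as (_&_&Hdm&_).
      destruct (INR_unbounded (u / d_min p)) as [i Hi].
      apply (moment_interval_of_le u (3*i) Hu); [now rewrite Elen|].
      assert (u < INR i * d_min p).
      { apply (Rmult_lt_compat_r (d_min p)) in Hi; [|exact Hdm].
        unfold Rdiv in Hi. rewrite Rmult_assoc, Rinv_l, Rmult_1_r in Hi; lra. }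
      pose proof (moments_grow Hp i ltac:(now rewrite Elen)). lra. }
  destruct Hj as [[j [Hj Hu']]|Hlast]; [|now do 3 right].
  destruct (nat_mod3_cases j) as [i [-> |[-> | ->]]].
  - left. exists i. replace (3*i+1)%nat with (S (3*i)) by lia. auto.
  - right; left. exists i. replace (3*i+2)%nat with (S (3*i+1)) by lia.
    split; [|exact Hu']. apply idx_ok_incrossing_end.
    now replace (3*i+2)%nat with (S (3*i+1)) by lia.
  - do 2 right; left. exists i. replace (3*i+3)%nat with (S (3*i+2)) by lia. auto.
Qed.

End SignificantMoments.

Lemma right_limit_deadline_unique {T} (rho : R -> State T) c s1 s2 y :
  RightLim rho c s1 -> RightLim rho c s2 -> Deadline s1 y = Deadline s2 y.
Proof.
  intros [e1 [He1 H1]] [e2 [He2 H2]].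
  set (u := c + Rmin e1 e2 / 2).
  assert (Hu : c < u < c + e1 /\ c < u < c + e2).
  { pose proof (Rmin_l e1 e2). pose proof (Rmin_r e1 e2).
    pose proof (Rmin_pos e1 e2 He1 He2). unfold u. lra. }
  destruct (H1 u (proj1 Hu)) as (_&D1&_). destruct (H2 u (proj2 Hu)) as (_&D2&_).
  now rewrite <- D1, <- D2.
Qed.

Lemma exec_consistent {T} p (M : Agent -> Prop) (s : State T) t :
  consistent (ctrl_upd p s t) ->
  consistent (fun u => exists A, M A /\ agent_upd p A s t u).
Proof.
  intros (C1&C2&_). split; [|split].
  - intros z e1 e2 [[|] [_ H1]] [[|] [_ H2]]; try contradiction. exact (C1 z e1 e2 H1 H2).
  - intros d1 d2 [[|] [_ H1]] [[|] [_ H2]]; try contradiction. exact (C2 d1 d2 H1 H2).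
  - intros g1 g2 [[|] [_ H1]] [[|] [_ H2]]; try contradiction.
    destruct H1 as [[-> D1]|[-> D1]], H2 as [[-> D2]|[-> D2]]; congruence.
Qed.

Lemma deadline_kept {T} p (rho : R -> State T) c s y :
  is_run p rho -> 0 <= c -> RightLim rho c s ->
  (forall e, ~ ctrl_upd p (rho c) c (UDeadline y e)) ->
  Deadline s y = Deadline (rho c) y.
Proof.
  intros (_&Hfire&_) Hc HR Hno.
  destruct (classic (st_eq s (rho c))) as [(_&E&_)|NE]; [apply E|].
  destruct (Hfire c s Hc HR NE) as [[M [Hcons Hincons]] _].
  destruct (classic (consistent (fun u => exists A, M A /\ agent_upd p A (rho c) c u)))
    as [C|NC].
  - destruct (Hcons C) as (_&Hd&_). apply (proj2 (Hd y)).
    intros e [[|] [_ HA]]; [contradiction | exact (Hno e HA)].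
  - now destruct (Hincons NC) as (_&E&_).
Qed.

(* An immediate Controller fires whenever it has an effective update; its result is
   the right limit, whichever other modules fire with it. *)
Lemma deadline_updated {T} p (rho : R -> State T) c s y e :
  immediate p rho Controller -> 0 <= c -> RightLim rho c s ->
  consistent (ctrl_upd p (rho c) c) -> ctrl_upd p (rho c) c (UDeadline y e) ->
  Deadline (rho c) y <> e -> Deadline s y = e.
Proof.
  intros Himm Hc HR Hcons Hu Hne.
  destruct (Himm c Hc (conj Hcons (ex_intro _ (UDeadline y e) (conj Hu Hne))))
    as [s' [HR' [_ [M [HM [Hap _]]]]]].
  destruct (Hap (exec_consistent p M _ _ Hcons)) as (_&Hd&_).
  rewrite (right_limit_deadline_unique rho c s s' y HR HR').
  apply (proj1 (Hd y)). now exists Controller.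
Qed.

Definition next_deadline {T} (p : Params) (s : State T) (t : R) (y : T) : ER :=
  match TrackStatus s y, Deadline s y with
  | empty, _ => Inf
  | coming, Inf => Fin (t + W p)
  | _, d => d
  end.

Lemma deadline_right_limit {T} p (rho : R -> State T) c s y :
  is_run p rho -> immediate p rho Controller -> 0 <= c -> RightLim rho c s ->
  consistent (ctrl_upd p (rho c) c) ->
  Deadline s y = next_deadline p (rho c) c y.
Proof.
  intros Hrun Himm Hc HR Hcons. unfold next_deadline.
  destruct (TrackStatus (rho c) y) eqn:Es, (Deadline (rho c) y) eqn:Ed.
  - apply (deadline_updated p rho c s y Inf Himm Hc HR Hcons); [|congruence].
    right. rewrite Ed. now repeat split.
  - rewrite <- Ed. apply (deadline_kept p rho c s y Hrun Hc HR).
    intros e [(A&_)|(_&B&_)]; [congruence | now rewrite Ed in B].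
  - rewrite <- Ed. apply (deadline_kept p rho c s y Hrun Hc HR).
    intros e [(_&B&_)|(A&_)]; congruence.
  - apply (deadline_updated p rho c s y _ Himm Hc HR Hcons); [|congruence].
    left. now repeat split.
  - rewrite <- Ed. apply (deadline_kept p rho c s y Hrun Hc HR).
    intros e [(A&_)|(A&_)]; congruence.
  - rewrite <- Ed. apply (deadline_kept p rho c s y Hrun Hc HR).
    intros e [(A&_)|(A&_)]; congruence.
Qed.

Definition deadline_profile {T} (p : Params) (rho : R -> State T) (y : T)
  (sig : nat -> R) (len : option nat) (u : R) : Prop :=
  (u = 0 -> Deadline (rho u) y = Inf) /\
  (forall i, idx_ok len (3*i+1) -> sig (3*i)%nat < u <= sig (3*i+1)%nat ->
     Deadline (rho u) y = Inf) /\
  (forall i, idx_ok len (3*i+3) -> sig (3*i+1)%nat < u <= sig (3*i+3)%nat ->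
     Deadline (rho u) y = Fin (sig (3*i+1)%nat + W p)) /\
  (forall k, len = Some k -> sig k < u -> Deadline (rho u) y = Inf).

Definition deadline_profile_at {T} (p : Params) (rho : R -> State T) (u : R) : Prop :=
  forall y sig len, sig_moments p rho y sig len -> deadline_profile p rho y sig len u.

(* A deadline [t_(3i+1) + W] is hit while the track is still [coming]. *)
Lemma empty_deadline_ne_now {T} p (rho : R -> State T) c z :
  valid_params p -> (forall z, exists sig len, sig_moments p rho z sig len) ->
  0 <= c -> deadline_profile_at p rho c ->
  TrackStatus (rho c) z = empty -> Deadline (rho c) z <> Fin c.
Proof.
  intros Hp Hmot Hc Hprof Hz HD. pose proof Hp as (Hdc&_&_&_&Hlt&_).
  destruct (Hmot z) as [sig [len Hs]].
  destruct (Hprof z sig len Hs) as (P0&P1&P2&P3).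
  destruct (Rle_lt_or_eq_dec 0 c Hc) as [Hpos|<-]; [|now rewrite P0 in HD].
  destruct (positive_time_cases Hs Hp c Hpos)
    as [[i [Hi Hci]]|[[i [Hi Hci]]|[[i [Hi Hci]]|[k [Hk Hck]]]]].
  - now rewrite (P1 i Hi Hci) in HD.
  - assert (Hi2 : idx_ok len (3*i+2)) by (apply (idx_ok_le len _ (3*i+3) Hi); lia).
    assert (sig (3*i+2)%nat < sig (3*i+3)%nat) by (apply (sig_lt Hs); [exact Hi | lia]).
    rewrite (P2 i Hi ltac:(lra)) in HD.
    assert (Hdl : sig (3*i+1)%nat + W p = c) by congruence.
    destruct Hs as (_&_&_&Hcm&_). destruct (Hcm i Hi2) as [Hcoming [Hmin _]].
    unfold W in Hdl. rewrite Hcoming in Hz; [discriminate | lra].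
  - assert (Hi2 : idx_ok len (3*i+2)) by (apply (idx_ok_le len _ (3*i+3) Hi); lia).
    assert (sig (3*i+1)%nat < sig (3*i+2)%nat) by (apply (sig_lt Hs); [exact Hi2 | lia]).
    rewrite (P2 i Hi ltac:(lra)) in HD.
    assert (Hdl : sig (3*i+1)%nat + W p = c) by congruence.
    destruct Hs as (_&_&_&Hcm&_). destruct (Hcm i Hi2) as [_ [Hmin _]].
    unfold W in Hdl. lra.
  - now rewrite (P3 k Hk Hck) in HD.
Qed.

(* SignalClose(z) and SignalOpen clash only if z is empty with Deadline(z) = CT. *)
Lemma ctrl_upd_consistent {T} p (s : State T) t :
  valid_params p ->
  (forall z, TrackStatus s z = empty -> Deadline s z <> Fin t) ->
  consistent (ctrl_upd p s t).
Proof.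
  intros (_&Hdo&_) Hne. split; [|split].
  - intros z e1 e2 [(A1&B1&->)|(A1&B1&->)] [(A2&B2&->)|(A2&B2&->)]; congruence.
  - assert (Hclash : forall z, Deadline s z = Fin t -> ~ SafeToOpen p s t).
    { intros z Hz Hsafe. destruct (Hsafe z) as [E|E]; [exact (Hne z E Hz)|].
      rewrite Hz in E. simpl in E. lra. }
    intros d1 d2 [(->&z&Hz)|(->&_&Hsafe)] [(->&z'&Hz')|(->&_&Hsafe')]; auto.
    + now destruct (Hclash z Hz).
    + now destruct (Hclash z' Hz').
  - intros g1 g2 [].
Qed.

Lemma deadline_on_constant_interval {T} p (rho : R -> State T) c c' u y :
  is_run p rho -> immediate p rho Controller -> 0 <= c < c' ->
  (forall u v, c < u < c' -> c < v < c' -> st_eq (rho u) (rho v)) ->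
  consistent (ctrl_upd p (rho c) c) -> c < u <= c' ->
  Deadline (rho u) y = next_deadline p (rho c) c y.
Proof.
  intros Hrun Himm Hc Hconst Hcons Hu.
  set (m := (c + c') / 2).
  assert (HR : RightLim rho c (rho m)).
  { exists (c' - c). split; [lra|]. intros v Hv. apply Hconst; unfold m; lra. }
  rewrite <- (deadline_right_limit p rho c (rho m) y Hrun Himm (proj1 Hc) HR Hcons).
  destruct (Rle_lt_or_eq_dec u c' (proj2 Hu)) as [Hlt | ->].
  - assert (Hum : st_eq (rho u) (rho m)) by (apply Hconst; unfold m; lra).
    now destruct Hum as (_&E&_).
  - destruct Hrun as (_&_&Hleft).
    assert (HL : LeftLim rho c' (rho m)).
    { exists (c' - c). split; [lra|]. intros v Hv. apply Hconst; unfold m; lra. }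
    now destruct (Hleft c' (rho m) ltac:(lra) HL) as [E _].
Qed.

Lemma deadline_profile_step {T} p (rho : R -> State T) c c' :
  valid_params p -> regular_run p rho -> 0 <= c < c' ->
  (forall u v, c < u < c' -> c < v < c' -> st_eq (rho u) (rho v)) ->
  deadline_profile_at p rho c ->
  forall u, c < u <= c' -> deadline_profile_at p rho u.
Proof.
  intros Hp Hreg Hc Hconst Hprof u Hu y sig len Hs.
  destruct Hreg as (Hrun & _ & Hmot & Himm & _).
  assert (Hcons : consistent (ctrl_upd p (rho c) c)).
  { apply (ctrl_upd_consistent p _ _ Hp). intros z.
    apply (empty_deadline_ne_now p rho c z Hp Hmot (proj1 Hc) Hprof). }
  assert (HD := deadline_on_constant_interval p rho c c' u y Hrun Himm Hc Hconst Hcons Hu).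
  assert (Hleft := fun j Hj => moment_le_left_end Hs c c' j u (proj1 Hc) Hconst Hj Hu).
  destruct (Hprof y sig len Hs) as (_&P1&P2&_).
  pose proof Hs as (_&_&Hempty&Hcm&Hin&Hlast).
  unfold next_deadline in HD. split; [|split; [|split]].
  - intros; lra.
  - intros i Hi Hui. rewrite HD, (Hempty i Hi c); [reflexivity|].
    split; [apply Hleft; [apply (idx_ok_le len _ (3*i+1) Hi); lia | lra] | lra].
  - intros i Hi Hui.
    assert (Hi1 : idx_ok len (3*i+1)) by (apply (idx_ok_le len _ (3*i+3) Hi); lia).
    assert (Hi2 : idx_ok len (3*i+2)) by (apply (idx_ok_le len _ (3*i+3) Hi); lia).
    assert (H01 : sig (3*i)%nat < sig (3*i+1)%nat) by (apply (sig_lt Hs); [exact Hi1 | lia]).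
    destruct (Rle_lt_or_eq_dec _ _ (Hleft _ Hi1 (proj1 Hui))) as [Hlt | <-].
    + assert (Hnot_empty : TrackStatus (rho c) y <> empty).
      { destruct (Rlt_or_le c (sig (3*i+2)%nat)).
        - rewrite (proj1 (Hcm i Hi2) c); [discriminate | lra].
        - rewrite (Hin i Hi c); [discriminate | lra]. }
      rewrite HD, (P2 i Hi ltac:(lra)).
      destruct (TrackStatus (rho c) y); [contradiction | reflexivity | reflexivity].
    + rewrite HD, (proj1 (Hcm i Hi2)), (P1 i Hi1); [reflexivity | lra |].
      split; [lra|]. apply (sig_lt Hs); [exact Hi2 | lia].
  - intros k Hk Hku. rewrite HD, (proj2 (Hlast k Hk) c); [reflexivity|].
    apply Hleft; [rewrite Hk; simpl; lia | exact Hku].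
Qed.

Lemma deadline_profile_0 {T} p (rho : R -> State T) :
  regular_run p rho -> deadline_profile_at p rho 0.
Proof.
  intros (_&Hinit&_) y sig len Hs. split; [|split; [|split]].
  - intros _. apply (proj2 (Hinit y)).
  - intros i Hi Hu. pose proof (sig_ge0 Hs (3*i) ltac:(apply (idx_ok_le len _ _ Hi); lia)). lra.
  - intros i Hi Hu. pose proof (sig_ge0 Hs (3*i+1) ltac:(apply (idx_ok_le len _ _ Hi); lia)). lra.
  - intros k Hk Hu. pose proof (sig_ge0 Hs k ltac:(rewrite Hk; simpl; lia)). lra.
Qed.

Lemma deadline_profile_everywhere {T} p (rho : R -> State T) u :
  valid_params p -> regular_run p rho -> 0 <= u -> deadline_profile_at p rho u.
Proof.
  intros Hp Hreg Hu. destruct (Rle_lt_or_eq_dec 0 u Hu) as [Hpos | <-];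
    [|exact (deadline_profile_0 p rho Hreg)].
  pose proof Hreg as ((Hpre & _) & _).
  destruct (Hpre u Hpos) as (n & pt & P0 & Pn & Pinc & Pconst).
  assert (Hupto : forall i, (i <= n)%nat ->
            0 <= pt i /\ forall v, 0 <= v <= pt i -> deadline_profile_at p rho v).
  { induction i as [|i IH]; intros Hi.
    - rewrite P0. split; [lra|]. intros v Hv. replace v with 0 by lra.
      exact (deadline_profile_0 p rho Hreg).
    - destruct (IH ltac:(lia)) as [Hi0 IHv].
      assert (pt i < pt (S i)) by (apply Pinc; lia).
      split; [lra|]. intros v Hv. destruct (Rle_or_lt v (pt i)) as [L|L]; [apply IHv; lra|].
      apply (deadline_profile_step p rho (pt i) (pt (S i)) Hp Hreg); try lra.
      + intros a b Ha Hb. apply (Pconst i); [lia | exact Ha | exact Hb].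
      + apply IHv. lra. }
  apply (proj2 (Hupto n (le_n n))). rewrite Pn. lra.
Qed.

(* A deadline [t_(3i+1) + W] is at least [t_(3i+2) - Delta_close], since the track is
   [coming] for at most [d_max]. *)
Lemma deadline_ge_before_crossing {T} p (rho : R -> State T) y sig len a b u :
  valid_params p -> sig_moments p rho y sig len -> 0 <= a < b ->
  (forall v, a < v < b -> TrackStatus (rho v) y <> incrossing) ->
  a < u < b -> deadline_profile p rho y sig len u ->
  ER_ge (Deadline (rho u) y) (Fin (b - Delta_close p)).
Proof.
  intros Hp Hs Hab Hnot Hu (_&P1&P2&P3).
  pose proof Hs as (_&_&_&Hcm&Hin&_).
  destruct (positive_time_cases Hs Hp u ltac:(lra))
    as [[i [Hi Hui]]|[[i [Hi Hui]]|[[i [Hi Hui]]|[k [Hk Hku]]]]].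
  - now rewrite (P1 i Hi Hui).
  - assert (Hi2 : idx_ok len (3*i+2)) by (apply (idx_ok_le len _ (3*i+3) Hi); lia).
    assert (sig (3*i+2)%nat < sig (3*i+3)%nat) by (apply (sig_lt Hs); [exact Hi | lia]).
    rewrite (P2 i Hi ltac:(lra)). unfold ER_ge.
    destruct (Rle_or_lt b (sig (3*i+2)%nat)) as [Lb | Lb].
    + destruct (proj2 (Hcm i Hi2)). unfold W, Delta_close. lra.
    + exfalso. apply (Hnot (sig (3*i+2)%nat)); [lra|]. apply (Hin i Hi). lra.
  - exfalso. set (v := (Rmax a (sig (3*i+2)%nat) + u) / 2).
    pose proof (Rmax_l a (sig (3*i+2)%nat)). pose proof (Rmax_r a (sig (3*i+2)%nat)).
    pose proof (Rmax_lub_lt a (sig (3*i+2)%nat) u (proj1 Hu) (proj1 Hui)).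
    apply (Hnot v); [unfold v; lra|]. apply (Hin i Hi). unfold v. lra.
  - now rewrite (P3 k Hk Hku).
Qed.

Theorem mainTheorem3 (Track : Type) (p : Params) (rho : R -> State Track)
  (x : Track) (sig : nat -> R) (len : option nat) :
  valid_params p -> FiniteType Track ->
  regular_run p rho ->
  sig_moments p rho x sig len ->
  (* (1) *)
  (Deadline (rho 0) x = Inf /\
   (forall i, idx_ok len (3*i+1) ->
      forall u, sig (3*i)%nat < u <= sig (3*i+1)%nat -> Deadline (rho u) x = Inf) /\
   (forall i, idx_ok len (3*i+3) ->
      forall u, sig (3*i+1)%nat < u <= sig (3*i+3)%nat ->
        Deadline (rho u) x = Fin (sig (3*i+1)%nat + W p)) /\
   (forall k, len = Some k -> forall u, sig k < u -> Deadline (rho u) x = Inf)) /\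
  (* (2) *)
  (forall a b, 0 <= a < b ->
     (forall u, a < u < b -> TrackStatus (rho u) x <> incrossing) ->
     forall u, a < u < b -> ER_ge (Deadline (rho u) x) (Fin (b - Delta_close p))).
Proof.
  intros Hp _ Hreg Hs.
  assert (Hprof : forall u, 0 <= u -> deadline_profile p rho x sig len u)
    by (intros u Hu; exact (deadline_profile_everywhere p rho u Hp Hreg Hu x sig len Hs)).
  split; [split; [|split; [|split]]|].
  - exact (proj1 (Hprof 0 (Rle_refl 0)) eq_refl).
  - intros i Hi u Hu.
    pose proof (sig_ge0 Hs (3*i) ltac:(apply (idx_ok_le len _ _ Hi); lia)).
    exact (proj1 (proj2 (Hprof u ltac:(lra))) i Hi Hu).
  - intros i Hi u Hu.
    pose proof (sig_ge0 Hs (3*i+1) ltac:(apply (idx_ok_le len _ _ Hi); lia)).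
    exact (proj1 (proj2 (proj2 (Hprof u ltac:(lra)))) i Hi Hu).
  - intros k Hk u Hu.
    pose proof (sig_ge0 Hs k ltac:(rewrite Hk; simpl; lia)).
    exact (proj2 (proj2 (proj2 (Hprof u ltac:(lra)))) k Hk Hu).
  - intros a b Hab Hnot u Hu.
    exact (deadline_ge_before_crossing p rho x sig len a b u Hp Hs Hab Hnot Hu
             (Hprof u ltac:(lra))).
Qed.
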